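(* Let $r\ge1$ be an integer, $d=2r-1$, $\beta>0$, and let $Q$ be a complex polynomial of degree $r$ with $Q(0)=0$. Define $a_i,b_i$ ($0\le i\le d$) by $1-2Q'(x)=\sum_{i=0}^d a_ix^i$ and $x\big(Q'(x)^2-Q'(x)-Q''(x)\big)=\sum_{i=0}^d b_ix^i$, and for $0\le i\le\min(n,d)$ put $\gamma_{ni}=\big(a_i(n-i+\frac\beta2)+b_i\big)\sqrt{\frac{n!(\beta)_n}{(n-i)!(\beta)_{n-i}}}$. Let $P_0=1$, $P_n=0$ for $n<0$, and $$\Big(x+\frac{\beta}{2}\Big)P_n(x)=\sqrt{(n+1)(n+\beta)}\,P_{n+1}(x)+\sum_{i=0}^{\min(n,d)}\gamma_{ni}P_{n-i}(x),\qquad n\ge0,$$ and set $\widehat P_n(x)=\sqrt{n!(\beta)_n}\,P_n(x)$. Then $$\sum_{n=0}^\infty\frac{\widehat P_n(x)}{n!(\beta)_n}z^n=e^{Q(z)}\,{}_1F_1\left(\begin{matrix}-x\\ \beta\end{matrix};-z\right).$$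
   Context: $(a)_n=a(a+1)\cdots(a+n-1)$, $(a)_0=1$; ${}_1F_1\left(\begin{matrix}a\\ b\end{matrix};x\right)=\sum_{m\ge0}\frac{(a)_m}{(b)_m}\frac{x^m}{m!}$. *)

(* Complex numbers: an arbitrary numClosedFieldType C
   (e.g. complex R for R : realType). *)
From HB Require Import structures.
From mathcomp Require Import all_boot all_order all_algebra.
Set Implicit Arguments.
Unset Strict Implicit.
Unset Printing Implicit Defensive.
Import Order.TTheory GRing.Theory Num.Theory.
Local Open Scope ring_scope.

Section Defs.
Variable C : numClosedFieldType.

Definition poch (a : C) (n : nat) : C := \prod_(i < n) (a + i%:R).

Definition acoef (Q : {poly C}) (i : nat) : C := (1 - 2%:R *: Q^`())`_i.

Definition bcoef (Q : {poly C}) (i : nat) : C :=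
  ('X * (Q^`() ^+ 2 - Q^`() - Q^`(2)))`_i.

Definition gamma (Q : {poly C}) (beta : C) (n i : nat) : C :=
  (acoef Q i * ((n - i)%:R + beta / 2%:R) + bcoef Q i)
  * sqrtC (n`!%:R * poch beta n / ((n - i)`!%:R * poch beta (n - i))).

End Defs.

Section Defs2.
Variable C : numClosedFieldType.

(* k-th Taylor coefficient of the formal power series e^{Q(z)}, for Q(0)=0:
   [z^k] sum_m Q(z)^m / m!  (only m <= k contribute since Q(0) = 0) *)
Definition expQ_coef (Q : {poly C}) (k : nat) : C :=
  \sum_(m < k.+1) (Q ^+ m)`_k / (m`!)%:R.

Definition F11_coef (x beta : C) (m : nat) : C :=
  poch (- x) m / poch beta m * (- 1) ^+ m / (m`!)%:R.

End Defs2.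

From HB Require Import structures.
From mathcomp Require Import all_boot all_order all_algebra.
From mathcomp Require Import ring zify.
Set Implicit Arguments. Unset Strict Implicit. Unset Printing Implicit Defensive.
Import Order.TTheory GRing.Theory Num.Theory.
Local Open Scope ring_scope.

(* The generating series G(z) = e^(Q(z)) 1F1(-x; beta; -z) satisfies
     z G'' + beta G' + A z G' + (beta/2) A G + B G = (x + beta/2) G,
   with A = 1 - 2Q' and B = z (Q'^2 - Q' - Q''): this follows from Kummer's
   equation z F'' + (beta + z) F' = x F for F = 1F1(-x; beta; -z) together with
   (e^Q)' = Q' e^Q.  The coefficient of z^n of this equation is the recurrence
   of the P_n after rescaling by sqrt(n! (beta)_n), so both sides agree by
   induction on n.  A coefficient of z^n only sees finitely many terms, so the
   argument runs on polynomial truncations of e^Q and 1F1, with "= O(z^K)"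
   expressed as divisibility by 'X^K. *)

Section VanishingOrder.
Variable F : fieldType.
Implicit Types p : {poly F}.

Lemma dvdp_XnP K p : reflect (forall k, (k < K)%N -> p`_k = 0) ('X^K %| p).
Proof.
apply: (iffP (dvdpP _ _)) => [[q ->] k kK | p_low]; first by rewrite coefMXn kK.
have take0 : take_poly K p = 0.
  by apply/polyP => k; rewrite coef_take_poly coef0; case: ifP => // /p_low.
by exists (drop_poly K p); rewrite -[LHS](poly_take_drop K) take0 add0r.
Qed.

Lemma dvdp_Xn_deriv K p : 'X^(K.+1) %| p -> 'X^K %| p^`().
Proof.
by move/dvdp_XnP=> p_low; apply/dvdp_XnP=> k kK; rewrite coef_deriv p_low ?mul0rn.
Qed.

Lemma dvdp_Xn_mulX K p : 'X^K %| p -> 'X^(K.+1) %| 'X * p.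
Proof. by move=> dvd_p; rewrite exprS dvdp_mul ?dvdpp. Qed.

Lemma dvdp_Xn_exp p m : p`_0 = 0 -> 'X^m %| p ^+ m.
Proof.
move=> p0; have dvdXp : 'X^1 %| p by apply/dvdp_XnP => -[|//] _.
exact: dvdp_exp2r dvdXp.
Qed.

End VanishingOrder.

Lemma coefXM_deriv (R : nzSemiRingType) (p : {poly R}) k : ('X * p^`())`_k = p`_k *+ k.
Proof. by case: k => [|k]; rewrite coefXM ?mulr0n //= coef_deriv. Qed.

Lemma pochS (C : numClosedFieldType) (a : C) m :
  poch a m.+1 = poch a m * (a + m%:R).
Proof. by rewrite /poch big_ord_recr. Qed.

Section TruncatedExp.
Variables (C : numClosedFieldType) (Q : {poly C}).

Definition expQ_trunc M : {poly C} := \sum_(m < M) (m`!%:R^-1 : C) *: Q ^+ m.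

Lemma coef_expQ_trunc M k : Q`_0 = 0 -> (k < M)%N ->
  (expQ_trunc M)`_k = expQ_coef Q k.
Proof.
move=> Q0 kM; rewrite coef_sum /expQ_coef.
rewrite (big_ord_widen M (fun m => (Q ^+ m)`_k / m`!%:R) kM) [RHS]big_mkcond /=.
apply: eq_bigr => m _; rewrite coefZ mulrC ltnS; case: leqP => // km.
by have /dvdp_XnP-> := dvdp_Xn_exp m Q0; rewrite ?mul0r.
Qed.

Lemma deriv_expQ_trunc M : (expQ_trunc M.+1)^`() = Q^`() * expQ_trunc M.
Proof.
rewrite /expQ_trunc raddf_sum big_ord_recl /= derivZ derivC scaler0 add0r.
rewrite mulr_sumr; apply: eq_bigr => m _.
rewrite derivZ deriv_exp /bump /= add1n -scalerMnr scalerMnl scalerAr.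
by rewrite factS natrM invfM -mulr_natr mulrAC mulVf ?mul1r ?pnatr_eq0.
Qed.

Lemma expQ_trunc_ode M : Q`_0 = 0 ->
  'X^M %| (expQ_trunc M.+1)^`() - Q^`() * expQ_trunc M.+1.
Proof.
move=> Q0; rewrite deriv_expQ_trunc [expQ_trunc M.+1]big_ord_recr /=.
rewrite mulrDr opprD addrA subrr add0r dvdpNr.
by rewrite -mul_polyC; do 2!apply: dvdp_mull; apply: dvdp_Xn_exp.
Qed.

End TruncatedExp.

Section Kummer.
Variables (C : numClosedFieldType) (beta x : C).

Hypothesis beta_nonpole : forall m, beta + m%:R != 0.

Lemma poch_neq0 m : poch beta m != 0.
Proof. by apply/prodf_neq0 => i _. Qed.

Lemma F11_coefS m :
  m.+1%:R * (m%:R + beta) * F11_coef x beta m.+1 = (x - m%:R) * F11_coef x beta m.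
Proof.
have fact_neq0 : m`!%:R != 0 :> C by rewrite pnatr_eq0 -lt0n fact_gt0.
have Sm_neq0 : 1 + m%:R != 0 :> C by rewrite nat1r pnatr_eq0.
rewrite /F11_coef !pochS factS natrM exprS.
by field; rewrite fact_neq0 poch_neq0 Sm_neq0 beta_nonpole.
Qed.

Definition F11_trunc M : {poly C} := \poly_(m < M) F11_coef x beta m.

Definition kummer_op (F : {poly C}) : {poly C} :=
  'X * F^`()^`() + beta%:P * F^`() + 'X * F^`() - x%:P * F.

Lemma F11_trunc_kummer K : 'X^K %| kummer_op (F11_trunc K.+1).
Proof.
apply/dvdp_XnP => k kK.
rewrite !coefB !coefD !coefXM_deriv !coefCM !coef_deriv !coef_poly !ltnS kK ltnW //.
transitivity (k.+1%:R * (k%:R + beta) * F11_coef x beta k.+1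
              - (x - k%:R) * F11_coef x beta k); first by ring.
by rewrite F11_coefS subrr.
Qed.

End Kummer.

Section GeneratingFunction.
Variables (C : numClosedFieldType) (beta x : C) (Q : {poly C}).

Definition apoly : {poly C} := 1 - 2%:R *: Q^`().
Definition bpoly : {poly C} := 'X * (Q^`() ^+ 2 - Q^`() - Q^`(2)).

Definition rec_coef n i : C :=
  acoef Q i * ((n - i)%:R + beta / 2%:R) + bcoef Q i.

Definition ode_op (G : {poly C}) : {poly C} :=
  'X * G^`()^`() + beta%:P * G^`() + apoly * ('X * G^`())
  + (beta / 2%:R)%:P * (apoly * G) + bpoly * G - (x + beta / 2%:R)%:P * G.

Lemma coef_ode_op G n : (ode_op G)`_n =
  n.+1%:R * (n%:R + beta) * G`_n.+1 + \sum_(i < n.+1) rec_coef n i * G`_(n - i)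
  - (x + beta / 2%:R) * G`_n.
Proof.
rewrite !coefB !coefD coefXM_deriv !coefCM !coef_deriv !coefM.
under eq_bigr do rewrite coefXM_deriv.
have -> : \sum_(i < n.+1) rec_coef n i * G`_(n - i) =
    \sum_(i < n.+1) apoly`_i * (G`_(n - i) *+ (n - i))
  + beta / 2%:R * \sum_(i < n.+1) apoly`_i * G`_(n - i)
  + \sum_(i < n.+1) bpoly`_i * G`_(n - i).
  rewrite mulr_sumr -!big_split /=; apply: eq_bigr => i _.
  by rewrite /rec_coef /acoef /bcoef -/apoly -/bpoly; ring.
ring.
Qed.

Lemma ode_op_mul (S F : {poly C}) : let E := S^`() - Q^`() * S in
  ode_op (S * F) = S * kummer_op beta x F + 'X * (F * E^`())
    + E * ('X * Q^`() * F + 2%:R%:P * 'X * F^`() + beta%:P * F + 'X * apoly * F).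
Proof.
move=> E.
rewrite /E /ode_op /kummer_op /apoly /bpoly derivnS derivn1 -mul_polyC !derivE.
have -> : beta%:P = (beta / 2%:R)%:P + (beta / 2%:R)%:P.
  by rewrite -polyCD; congr _%:P; field.
ring.
Qed.

Hypothesis Q0 : Q`_0 = 0.
Hypothesis beta_nonpole : forall m, beta + m%:R != 0.

Lemma expQ_F11_trunc_ode n :
  'X^(n.+1) %| ode_op (expQ_trunc Q n.+2 * F11_trunc beta x n.+2).
Proof.
have dvdE := expQ_trunc_ode n.+1 Q0.
rewrite ode_op_mul; apply: dvdp_add; first apply: dvdp_add.
- by apply: dvdp_mull; apply: F11_trunc_kummer.
- by apply/dvdp_Xn_mulX/dvdp_mull/dvdp_Xn_deriv.
- by apply: dvdp_mulr.
Qed.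

Definition expQ_F11_coef n : C :=
  \sum_(k < n.+1) expQ_coef Q k * F11_coef x beta (n - k).

Lemma expQ_F11_coef_rec n :
  (x + beta / 2%:R) * expQ_F11_coef n =
  n.+1%:R * (n%:R + beta) * expQ_F11_coef n.+1
  + \sum_(i < n.+1) rec_coef n i * expQ_F11_coef (n - i).
Proof.
set G := expQ_trunc Q n.+2 * F11_trunc beta x n.+2.
have coefG k : (k <= n.+1)%N -> G`_k = expQ_F11_coef k.
  move=> kn; rewrite coefM; apply: eq_bigr => j _.
  have jn : (j < n.+2)%N by apply: leq_ltn_trans (leq_ord j) _.
  rewrite coef_expQ_trunc // coef_poly ifT //.
  by apply: leq_ltn_trans (leq_subr _ _) _.
have /dvdp_XnP/(_ n (ltnSn n)) := expQ_F11_trunc_ode n.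
rewrite coef_ode_op !coefG ?leqnSn //.
under eq_bigr do rewrite coefG ?(leq_trans (leq_subr _ _) (leqnSn _)) //.
by move/eqP; rewrite subr_eq0 => /eqP.
Qed.

End GeneratingFunction.

Lemma rec_coef_eq0 (C : numClosedFieldType) (beta : C) (Q : {poly C}) r n i :
  (size Q <= r.+1)%N -> (2 * r - 1 < i)%N -> rec_coef beta Q n i = 0.
Proof.
move=> sizeQ ri.
have Q1_eq0 j : (r <= j)%N -> Q^`()`_j = 0.
  by move=> rj; rewrite coef_deriv nth_default ?mul0rn // (leq_trans sizeQ).
have size_Q1 : (size Q^`() <= r)%N by apply/leq_sizeP.
have Q1sq_eq0 : (Q^`() ^+ 2)`_i.-1 = 0.
  by apply/nth_default/(leq_trans (size_polyMleq _ _)); lia.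
case: i ri Q1sq_eq0 => [|i] ri Q1sq_eq0; first lia.
rewrite /rec_coef /acoef /bcoef coefB coef1 coefZ coefXM !coefB /= Q1sq_eq0.
rewrite [Q^`()`_i.+1]Q1_eq0; last lia.
rewrite (Q1_eq0 i) 1?coef_deriv ?(Q1_eq0 i.+1) ?mul0rn; try lia.
by rewrite !(mulr0, subr0, sub0r, oppr0, mul0r, add0r).
Qed.

Lemma big_ord_minn (V : nmodType) (F : nat -> V) n d :
  (forall i, (d < i)%N -> F i = 0) ->
  \sum_(i < (minn n d).+1) F i = \sum_(i < n.+1) F i.
Proof.
move=> F_eq0; rewrite (big_ord_widen n.+1 F) ?ltnS ?geq_minl // big_mkcond.
apply: eq_bigr => i _; case: ifP => // /negbT.
by rewrite ltnS leq_min (ltnSE (ltn_ord i)) -ltnNge => /F_eq0.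
Qed.

Lemma recurrence_uniq (R : idomainType) (a : R) (t : nat -> R) (K : nat -> nat)
    (c : nat -> nat -> R) (u v : nat -> R) :
  (forall n, t n != 0) ->
  (forall n, a * u n = t n * u n.+1 + \sum_(i < K n) c n i * u (n - i)%N) ->
  (forall n, a * v n = t n * v n.+1 + \sum_(i < K n) c n i * v (n - i)%N) ->
  u 0 = v 0 -> forall n, u n = v n.
Proof.
move=> t_neq0 u_rec v_rec uv0; elim/ltn_ind => -[// | n] IH.
have uv_le k : (k <= n)%N -> u k = v k by move=> kn; apply: IH; rewrite ltnS.
apply: (mulfI (t_neq0 n)); apply: (addIr (\sum_(i < K n) c n i * v (n - i)%N)).
rewrite -v_rec -uv_le // u_rec; congr (_ + _).
by apply: eq_bigr => i _; rewrite uv_le ?leq_subr.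
Qed.

Section Normalization.
Variables (C : numClosedFieldType) (beta : C).
Hypothesis beta_gt0 : 0 < beta.

Definition fact_poch n : C := n`!%:R * poch beta n.

Definition normalized (P : nat -> C) n : C :=
  sqrtC (fact_poch n) * P n / fact_poch n.

Lemma fact_poch_gt0 n : 0 < fact_poch n.
Proof.
rewrite mulr_gt0 ?ltr0n ?fact_gt0 //; apply: prodr_gt0 => i _.
by rewrite ltr_wpDr ?ler0n.
Qed.

Lemma fact_pochS n : fact_poch n.+1 = n.+1%:R * (n%:R + beta) * fact_poch n.
Proof. by rewrite /fact_poch pochS factS natrM; ring. Qed.

Lemma sqrtC_fact_pochS n : let t := n.+1%:R * (n%:R + beta) in
  sqrtC t * sqrtC (fact_poch n.+1) = t * sqrtC (fact_poch n).
Proof.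
have t_ge0 : 0 <= n.+1%:R * (n%:R + beta).
  exact: mulr_ge0 (ler0n _ _) (addr_ge0 (ler0n _ _) (ltW beta_gt0)).
have c_ge0 := ltW (fact_poch_gt0 n).
by rewrite /= fact_pochS [sqrtC (_ * fact_poch n)]sqrtCM ?nnegrE // mulrA -expr2 sqrtCK.
Qed.

Lemma sqrtC_fact_poch_div n m :
  sqrtC (fact_poch n / fact_poch m) * sqrtC (fact_poch m) = sqrtC (fact_poch n).
Proof.
have [cn_gt0 cm_gt0] := (fact_poch_gt0 n, fact_poch_gt0 m).
by rewrite -sqrtCM ?nnegrE ?divr_ge0 ?ltW // divfK ?lt0r_neq0.
Qed.

Lemma normalizedK P n : sqrtC (fact_poch n) * normalized P n = P n.
Proof.
have c_neq0 := lt0r_neq0 (fact_poch_gt0 n).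
by rewrite /normalized !mulrA -expr2 sqrtCK mulrAC mulfV ?mul1r.
Qed.

Lemma normalized_rec x Q d (P : nat -> C) :
  (forall n, (x + beta / 2%:R) * P n =
     sqrtC (n.+1%:R * (n%:R + beta)) * P n.+1
     + \sum_(i < (minn n d).+1) gamma Q beta n i * P (n - i)%N) ->
  forall n, (x + beta / 2%:R) * normalized P n =
     n.+1%:R * (n%:R + beta) * normalized P n.+1
     + \sum_(i < (minn n d).+1) rec_coef beta Q n i * normalized P (n - i)%N.
Proof.
move=> P_rec n; have s_gt0 := sqrtC_gt0 (fact_poch n).
rewrite fact_poch_gt0 in s_gt0; apply: (mulfI (lt0r_neq0 s_gt0)).
rewrite mulrCA normalizedK P_rec [RHS]mulrDr mulr_sumr.
congr (_ + _).
  by rewrite -(normalizedK P n.+1) mulrA sqrtC_fact_pochS; ring.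
apply: eq_bigr => i _.
rewrite -(normalizedK P (n - i)) -(sqrtC_fact_poch_div n (n - i)).
by rewrite /gamma /rec_coef -/(fact_poch n) -/(fact_poch (n - i)); ring.
Qed.

End Normalization.

Theorem mainTheorem3 (C : numClosedFieldType) (r : nat) (beta x : C)
  (Q : {poly C}) (P : nat -> C) :
  (1 <= r)%N ->
  0 < beta ->
  size Q = r.+1 ->
  Q`_0 = 0 ->
  P 0%N = 1 ->
  (forall n : nat,
     (x + beta / 2%:R) * P n =
       sqrtC (n.+1%:R * (n%:R + beta)) * P n.+1
       + \sum_(i < (minn n (2 * r - 1)).+1) gamma Q beta n i * P (n - i)%N) ->
  forall n : nat,
    sqrtC ((n`!)%:R * poch beta n) * P n / ((n`!)%:R * poch beta n) =
      \sum_(k < n.+1) expQ_coef Q k * F11_coef x beta (n - k).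
Proof.
move=> _ beta_gt0 sizeQ Q0 P0 P_rec n.
have beta_nonpole m : beta + m%:R != 0 by rewrite lt0r_neq0 ?ltr_wpDr ?ler0n.
change (normalized beta P n = expQ_F11_coef beta x Q n).
apply: (recurrence_uniq _ (normalized_rec beta_gt0 P_rec)) => [m | m | ].
- by rewrite mulf_neq0 ?pnatr_eq0 // addrC.
- rewrite (@big_ord_minn _ (fun i => rec_coef beta Q m i * expQ_F11_coef beta x Q (m - i))).
    exact: expQ_F11_coef_rec.
  by move=> i /(rec_coef_eq0 beta m (eq_leq sizeQ))->; rewrite mul0r.
- by rewrite /normalized /fact_poch /expQ_F11_coef /expQ_coef /F11_coef /poch
    !big_ord1 !big_ord0 P0 coef1 /= !(mulr1, divr1, sqrtC1).
Qed.
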